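(* Let $p>3$ be a prime, $q$ a power of $p$, and $n\ge 0$ an integer with $3\mid n$. If $F_n(1,x)$ is a permutation polynomial of $\mathbb{F}_q$, then $\gcd(n,q^2-1)=3$.
   Context: For an integer $n\ge 1$, the $n$-th reversed Dickson polynomial of the third kind is $F_n(a,x)=\sum_{i=0}^{\lfloor n/2\rfloor}\frac{n-2i}{n-i}\binom{n-i}{i}(-x)^i a^{n-2i}$, where each coefficient $\frac{n-2i}{n-i}\binom{n-i}{i}$ is an integer (read in $\mathbb{F}_q$), and $F_0(a,x)=0$. A polynomial $f\in\mathbb{F}_q[x]$ is a permutation polynomial of $\mathbb{F}_q$ if $c\mapsto f(c)$ is a bijection of $\mathbb{F}_q$. *)

From HB Require Import structures.
From mathcomp Require Import all_boot all_order all_algebra all_field.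
Set Implicit Arguments. Unset Strict Implicit. Unset Printing Implicit Defensive.
Import GRing.Theory.
Local Open Scope ring_scope.

(* The integer coefficient (n-2i)/(n-i) * C(n-i, i) of the n-th reversed
   Dickson polynomial of the third kind (an exact division for n >= 1,
   0 <= i <= n/2). *)
Definition rdickson3_coef (n i : nat) : nat :=
  (((n - 2 * i) * 'C(n - i, i)) %/ (n - i))%N.

Definition rdickson3 (R : nzRingType) (n : nat) (a : R) : {poly R} :=
  if n == 0%N then 0 else
  \sum_(i < n./2.+1)
     ((rdickson3_coef n i)%:R * (-1) ^+ i * a ^+ (n - 2 * i)) *: 'X^i.

Definition is_permpoly (F : finFieldType) (f : {poly F}) : Prop :=
  bijective (fun c : F => f.[c]).

From HB Require Import structures.
From mathcomp Require Import all_boot all_order all_algebra all_field.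
From mathcomp Require Import cyclic zify ring.

(* With the Jacobsthal polynomials J_m(t) = sum_i C(m-i,i) t^i one has
   F_n(1,c) = J_(n-1)(-c), and the Binet formula
   (2y-1) J_(n-1)(-y(1-y)) = y^n - (1-y)^n.  If some e > 3 divided both n
   and q-1 or q+1, a primitive e-th root of unity z over F_q would give
   y = z/(1+z) with y^n = (1-y)^n, so that c = y(1-y) = z/(1+z)^2 is a root
   of F_n(1,x); moreover c lies in F_q because z^q = z^(+-1), and c <> 1
   because z^3 <> 1.  Since 3 | n forces F_n(1,1) = 0 as well, F_n(1,x)
   would not be injective.  Hence n has no common divisor > 3 with q-1 or
   q+1, which for q odd and prime to 3 pins gcd(n, q^2-1) down to 3. *)

Set Implicit Arguments. Unset Strict Implicit. Unset Printing Implicit Defensive.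
Import GRing.Theory.

Lemma gcdn_mul_eq3 n a b : 0 < n -> 3 %| n -> 3 %| a -> ~~ (3 %| b) ->
  2 %| a -> 2 %| b -> gcdn n a < 4 -> gcdn n b < 4 -> gcdn n (a * b) = 3.
Proof.
move=> n0 n3 a3 b3 a2 b2 ga gb.
have ga3 : gcdn n a = 3.
  have : 3 %| gcdn n a by rewrite dvdn_gcd n3 a3.
  have : 0 < gcdn n a by rewrite gcdn_gt0 n0.
  by lia.
have n_odd : ~~ (2 %| n) by apply/negP => n2; have := dvdn_gcd 2 n a; rewrite ga3 n2 a2.
have gb1 : gcdn n b = 1.
  have : 0 < gcdn n b by rewrite gcdn_gt0 n0.
  have : ~~ (2 %| gcdn n b) by apply: contra n_odd => /dvdn_trans; apply; apply: dvdn_gcdl.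
  have : ~~ (3 %| gcdn n b) by apply: contra b3 => /dvdn_trans; apply; apply: dvdn_gcdr.
  by lia.
by rewrite Gauss_gcdl // /coprime gb1.
Qed.

Lemma gcdn_sqr_sub1 n q : 0 < n -> odd q -> ~~ (3 %| q) -> 3 %| n ->
  (forall e, e %| n -> (e %| q - 1) || (e %| q.+1) -> e < 4) ->
  gcdn n (q ^ 2 - 1) = 3.
Proof.
move=> n0 q_odd q3 n3 small.
have gm : gcdn n (q - 1) < 4 by apply: small; rewrite ?dvdn_gcdl ?dvdn_gcdr.
have gp : gcdn n q.+1 < 4 by apply: small; rewrite ?dvdn_gcdl ?dvdn_gcdr ?orbT.
have -> : q ^ 2 - 1 = (q - 1) * q.+1 by lia.
have [qm3 | qp3] : 3 %| q - 1 \/ 3 %| q.+1 by lia.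
  by apply: gcdn_mul_eq3 => //; lia.
by rewrite mulnC; apply: gcdn_mul_eq3 => //; lia.
Qed.

Local Open Scope ring_scope.

Lemma big_ord_trunc (V : nmodType) (f : nat -> V) K N :
  (K <= N)%N -> (forall i, (K <= i)%N -> f i = 0) ->
  \sum_(i < N) f i = \sum_(i < K) f i.
Proof.
move=> KN f0; rewrite -!(big_mkord xpredT) (big_cat_nat (n := K)) //=.
rewrite [X in _ + X]big1_seq ?addr0 // => i /andP[_].
by rewrite mem_index_iota => /andP[/f0].
Qed.

Lemma binS_subn m i : 'C(m.+1 - i, i.+1) = ('C(m - i, i.+1) + 'C(m - i, i))%N.
Proof.
case: (leqP i m) => im; first by rewrite subSn // binS.
have [-> ->] : (m.+1 - i = 0 /\ m - i = 0)%N by lia.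
by rewrite !bin0n; case: i im.
Qed.

Section Jacobsthal.

Variable R : comNzRingType.
Implicit Types (t y : R) (m : nat).

Definition jacobsthal m t : R := \sum_(i < m.+1) 'C(m - i, i)%:R * t ^+ i.

Lemma jacobsthal_widen m N t : (m./2 < N)%N ->
  \sum_(i < N) 'C(m - i, i)%:R * t ^+ i = jacobsthal m t.
Proof.
move=> mN; pose f i := 'C(m - i, i)%:R * t ^+ i.
have f0 i : (m./2.+1 <= i)%N -> f i = 0 by move=> mi; rewrite /f bin_small ?mul0r //; lia.
by rewrite (big_ord_trunc mN f0) /jacobsthal (big_ord_trunc (N := m.+1) _ f0) //; lia.
Qed.

Lemma jacobsthal0 t : jacobsthal 0 t = 1.
Proof. by rewrite /jacobsthal big_ord1 bin0 mulr1. Qed.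

Lemma jacobsthal1 t : jacobsthal 1 t = 1.
Proof. by rewrite /jacobsthal !big_ord_recl big_ord0 /= bin0 bin0n mul0r mulr1 !addr0. Qed.

Lemma jacobsthalSS m t : jacobsthal m.+2 t = jacobsthal m.+1 t + t * jacobsthal m t.
Proof.
rewrite {1}/jacobsthal big_ord_recl /=.
under eq_bigr => i _ do rewrite /bump /= add1n subSS binS_subn natrD mulrDl.
rewrite big_split /= addrA -(@jacobsthal_widen m.+1 m.+3); last lia.
rewrite -(@jacobsthal_widen m m.+2); last lia.
rewrite [in RHS]big_ord_recl mulr_sumr /= bin0.
congr (_ + _); apply: eq_bigr => i _.
by rewrite mulrCA -exprS.
Qed.

(* Binet's formula, the roots of X^2 - X - t being y and 1 - y. *)
Lemma jacobsthal_binet y m :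
  (y - (1 - y)) * jacobsthal m (- (y * (1 - y))) = y ^+ m.+1 - (1 - y) ^+ m.+1.
Proof.
elim/ltn_ind: m => -[|[|m]] IH.
- by rewrite jacobsthal0 mulr1; ring.
- by rewrite jacobsthal1 mulr1; ring.
rewrite jacobsthalSS mulrDr mulrCA !IH //.
by rewrite !(exprS y) !(exprS (1 - y)); ring.
Qed.

Lemma jacobsthalN1_add3 m : jacobsthal m.+3 (-1) = - jacobsthal m (-1).
Proof. by rewrite !jacobsthalSS; ring. Qed.

Lemma jacobsthalN1_eq0 k : jacobsthal (3 * k).+2 (-1) = 0.
Proof.
elim: k => [|k IH]; first by rewrite jacobsthalSS jacobsthal1 jacobsthal0; ring.
have -> : ((3 * k.+1).+2 = (3 * k).+2.+3)%N by lia.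
by rewrite jacobsthalN1_add3 IH oppr0.
Qed.

End Jacobsthal.

Lemma rmorph_jacobsthal (R S : comNzRingType) (f : {rmorphism R -> S}) m t :
  f (jacobsthal m t) = jacobsthal m (f t).
Proof.
rewrite rmorph_sum; apply: eq_bigr => i _.
by rewrite rmorphM rmorph_nat rmorphXn.
Qed.

Lemma rdickson3_coefE n i : (i < n)%N -> rdickson3_coef n i = 'C(n.-1 - i, i).
Proof.
move=> ilt; rewrite /rdickson3_coef.
have -> : (n - 2 * i = n - i - i)%N by lia.
rewrite -mul_bin_down mulKn; last lia.
by have -> : ((n - i).-1 = n.-1 - i)%N by lia.
Qed.

Lemma horner_rdickson3_1 (R : comNzRingType) n (c : R) : (0 < n)%N ->
  (rdickson3 n 1).[c] = jacobsthal n.-1 (- c).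
Proof.
move=> n0; rewrite /rdickson3 -if_neg -lt0n n0 horner_sum.
rewrite -(@jacobsthal_widen _ _ n./2.+1); last lia.
apply: eq_bigr => i _.
rewrite hornerZ hornerXn expr1n mulr1 rdickson3_coefE; last by have := ltn_ord i; lia.
by rewrite [(- c) ^+ _]exprNn mulrA.
Qed.

Lemma jacobsthal_unity_root (L : fieldType) (z : L) m :
  z ^+ m.+1 = 1 -> z != 1 -> 1 + z != 0 ->
  jacobsthal m (- (z / (1 + z) ^+ 2)) = 0.
Proof.
move=> zm z1 z_1; pose y := z / (1 + z).
have y1 : 1 - y = (1 + z)^-1 by rewrite /y; field.
have := jacobsthal_binet y m.
rewrite y1 [y * _]mulrAC -mulrA -expr2 /y exprMn zm mul1r subrr => /eqP.
rewrite mulf_eq0 => /orP[|/eqP]; last by rewrite exprVn.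
have -> : z / (1 + z) - (1 + z)^-1 = (z - 1) / (1 + z) by field.
by rewrite mulf_eq0 invr_eq0 (negbTE z_1) orbF subr_eq0 (negbTE z1).
Qed.

Lemma cube_eq1_of_div_sqr_eq1 (L : fieldType) (z : L) :
  z / (1 + z) ^+ 2 = 1 -> z ^+ 3 = 1.
Proof.
have [-> | z_1] := eqVneq (1 + z) 0.
  by rewrite expr0n invr0 mulr0 => /eqP; rewrite eq_sym oner_eq0.
move/(congr1 ( *%R^~ ((1 + z) ^+ 2))); rewrite divfK ?expf_neq0 // mul1r => zE.
apply/eqP; rewrite -subr_eq0.
have -> : z ^+ 3 - 1 = (z - 1) * ((1 + z) ^+ 2 - z) by ring.
by rewrite -zE subrr mulr0.
Qed.

Lemma natr_card (F : finFieldType) : #|F|%:R = 0 :> F.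
Proof.
have [p _ pF] := finPcharP F; apply/eqP; rewrite -(dvdn_pcharf pF).
have := finNzRing_gt1 F; rewrite (card_pprimeChar pF).
by case: (logn _ _) => // k _; rewrite expnS dvdn_mulr.
Qed.

Lemma natr_dvd_card_pm1_neq0 (F : finFieldType) e :
  ((e %| #|F| - 1) || (e %| #|F|.+1))%N -> e%:R != 0 :> F.
Proof.
have q1 : (1 <= #|F|)%N by apply: ltnW (finNzRing_gt1 F).
case/orP => /dvdnP[k qk]; apply/eqP => e0.
  have : (#|F| - 1)%:R = 0 :> F by rewrite qk natrM e0 mulr0.
  by rewrite natrB // natr_card sub0r => /eqP; rewrite oppr_eq0 oner_eq0.
have : #|F|.+1%:R = 0 :> F by rewrite qk natrM e0 mulr0.
by rewrite -addn1 natrD natr_card add0r => /eqP; rewrite oner_eq0.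
Qed.

Lemma exists_prim_root_ext (F : finFieldType) e : (0 < e)%N -> e%:R != 0 :> F ->
  exists (L : fieldExtType F) (z : L), e.-primitive_root z.
Proof.
move=> e_gt0 eF; have nzXe : ('X^e - 1 : {poly F}) != 0.
  by rewrite -size_poly_eq0 size_Xn_sub_1.
have [L [rs splitL _]] := FinSplittingFieldFor nzXe; exists L.
have XeE : ('X^e - 1 : {poly L}) = \prod_(z <- rs) ('X - z%:P).
  apply/eqP; rewrite -eqp_monic ?monic_Xn_sub_1 ?monic_prod_XsubC //.
  by move: splitL; rewrite rmorphB /= map_polyXn rmorph1.
have eL : e%:R != 0 :> L by rewrite -(rmorph_nat (in_alg L)) fmorph_eq0.
have rs_uniq : uniq rs.
  by rewrite -separable_prod_XsubC -XeE separable_Xn_sub_1.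
have rs_size : size rs = e.
  by have := size_prod_XsubC rs id; rewrite -XeE size_Xn_sub_1 //; case.
have rs_roots : all e.-unity_root rs.
  apply/allP => z zrs; have : root (\prod_(z <- rs) ('X - z%:P)) z.
    by rewrite root_prod_XsubC.
  by rewrite -XeE.
have := has_prim_root e_gt0 rs_roots rs_uniq; rewrite rs_size leqnn.
by case/(_ isT)/hasP => z _ zprim; exists z.
Qed.

Section FiniteBase.

Variables (F : finFieldType) (L : fieldExtType F).

Lemma exprD_card (u v : L) : (u + v) ^+ #|F| = u ^+ #|F| + v ^+ #|F|.
Proof.
have [p pp pF] := finPcharP F; apply: exprDn_pchar.
by rewrite (card_pprimeChar pF) pnatX (pnatE _ pp) pchar_lalg pF.
Qed.

Lemma expr_card_fixed_inalg (x : L) : x ^+ #|F| = x -> exists c : F, x = c%:A.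
Proof.
move=> xq; have : x \in (1%AS : {subfield L}).
  by rewrite Fermat's_little_theorem dimv1 expn1 xq.
by case/vlineP => c ->; exists c.
Qed.

(* The map z |-> z / (1 + z)^2 is invariant under z |-> z^-1. *)
Lemma div_sqr_addr1_inalg (z : L) : z != 0 -> 1 + z != 0 ->
  z ^+ #|F| = z \/ z ^+ #|F| = z^-1 -> exists c : F, z / (1 + z) ^+ 2 = c%:A.
Proof.
move=> z0 z_1 zq; apply: expr_card_fixed_inalg.
rewrite exprMn exprVn exprAC exprD_card expr1n.
by case: zq => ->; last field; rewrite ?z0 ?z_1.
Qed.

End FiniteBase.

Lemma prim_root_expr_pm1 (L : fieldType) (z : L) e q :
  e.-primitive_root z -> (0 < q)%N -> ((e %| q - 1) || (e %| q.+1))%N ->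
  z ^+ q = z \/ z ^+ q = z^-1.
Proof.
move=> zprim q0; rewrite !(prim_order_dvd zprim) => /orP[/eqP zq1 | /eqP zq1].
  by left; rewrite -(subnK q0) exprD zq1 mul1r.
have z0 : z != 0 by rewrite (prim_root_eq0 zprim) -lt0n (prim_order_gt0 zprim).
by right; apply: (mulfI z0); rewrite mulfV // -exprS.
Qed.

Lemma jacobsthal_root_inF (F : finFieldType) n e :
  (0 < n)%N -> (3 < e)%N -> (e %| n)%N -> ((e %| #|F| - 1) || (e %| #|F|.+1))%N ->
  exists2 c : F, c != 1 & jacobsthal n.-1 (- c) = 0.
Proof.
move=> n0 e3 en e_q; have e0 : (0 < e)%N by lia.
have [L [z zprim]] := exists_prim_root_ext e0 (natr_dvd_card_pm1_neq0 e_q).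
have zk_neq1 k : (0 < k < e)%N -> z ^+ k != 1.
  by case/andP=> k0 ke; rewrite -(prim_order_dvd zprim) gtnNdvd.
have z1 : z != 1 by apply: (zk_neq1 1%N); lia.
have z2 : z ^+ 2 != 1 by apply: zk_neq1; lia.
have z3 : z ^+ 3 != 1 by apply: zk_neq1; lia.
have z0 : z != 0 by rewrite (prim_root_eq0 zprim) -lt0n.
have z_1 : 1 + z != 0.
  rewrite addrC addr_eq0; apply/eqP => zN1; move: z2.
  by rewrite zN1 sqrrN expr1n eqxx.
have zq := prim_root_expr_pm1 zprim (ltnW (finNzRing_gt1 F)) e_q.
have [c xc] := div_sqr_addr1_inalg z0 z_1 zq.
exists c.
  apply/eqP => c1; move: z3.
  by rewrite cube_eq1_of_div_sqr_eq1 ?eqxx // xc c1 scale1r.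
apply: (fmorph_inj (in_alg L)); rewrite rmorph_jacobsthal rmorphN /= -xc scale0r.
apply: jacobsthal_unity_root; rewrite ?prednK //.
by apply/eqP; rewrite -(prim_order_dvd zprim).
Qed.

Theorem theorem3p5 (F : finFieldType) (p n : nat) :
  prime p -> (3 < p)%N -> (p \in [pchar F])%R -> (3 %| n)%N ->
  is_permpoly (rdickson3 n (1 : F)%R) ->
  gcdn n (#|F| ^ 2 - 1) = 3%N.
Proof.
move=> pp p3 pF n3 /bij_inj inj.
have n0 : (0 < n)%N.
  rewrite lt0n; apply/eqP => n0; have := inj 0 1; rewrite n0 /rdickson3 !horner0.
  by move=> /(_ erefl)/eqP; rewrite eq_sym oner_eq0.
have J1 : jacobsthal n.-1 (-1 : F) = 0.
  case/dvdnP: n3 n0 => [[|k] ->] // _.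
  have -> : (k.+1 * 3).-1 = (3 * k).+2 by lia.
  exact: jacobsthalN1_eq0.
apply: gcdn_sqr_sub1 => //.
- rewrite (card_pprimeChar pF) oddX.
  by case: (even_prime pp) => [p2 | ->]; [rewrite p2 in p3 | rewrite orbT].
- rewrite (card_pprimeChar pF) Euclid_dvdX // dvdn_prime2 //.
  by apply/negP => /andP[/eqP p3' _]; rewrite -p3' in p3.
move=> e en e_q; rewrite ltnNge; apply/negP => e3.
have [c c1 Jc] := jacobsthal_root_inF n0 e3 en e_q.
case/negP: c1; apply/eqP; apply: inj.
by rewrite /= !horner_rdickson3_1 // Jc J1.
Qed.
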